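(* Let $f(x)=\frac1n\sum_{i=1}^n f_i(x)$ where each $f_i:\mathbb{R}^d\to\mathbb{R}$ is differentiable and $\mu_i$-strongly convex with $\mu_i>0$, and let $x_\star$ be the minimizer of $f$. Let $p_1,\dots,p_n>0$ with $\sum_i p_i=1$, and define $$\mu_{\rm NS}:=\min_i\frac{\mu_i}{np_i},\qquad \sigma_{\star,\rm NS}^2:=\frac1n\sum_{i=1}^n\frac{1}{np_i}\|\nabla f_i(x_\star)\|^2.$$ Consider SPPM-NS: starting from arbitrary $x_0\in\mathbb{R}^d$, at each step $k$ choose $i_k=i$ with probability $p_i$ (independently of the past) and set $x_{k+1}=\operatorname{prox}_{\frac{\gamma}{np_{i_k}}f_{i_k}}(x_k)$. Then for any $\gamma>0$ and $k\ge 0$, $$\mathbb{E}\|x_k-x_\star\|^2\le\left(\frac{1}{1+\gamma\mu_{\rm NS}}\right)^{2k}\|x_0-x_\star\|^2+\frac{\gamma\sigma_{\star,\rm NS}^2}{\gamma\mu_{\rm NS}^2+2\mu_{\rm NS}}.$$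
   Context: $\operatorname{prox}_{\gamma\phi}(y):=\arg\min_{x\in\mathbb{R}^d}\{\phi(x)+\frac{1}{2\gamma}\|x-y\|^2\}$. $\mu$-strong convexity of $g$: $g(y)+\langle\nabla g(y),x-y\rangle+\frac{\mu}{2}\|x-y\|^2\le g(x)$ for all $x,y$. *)

From HB Require Import structures.
From mathcomp Require Import all_boot all_order all_algebra.
From mathcomp Require Import all_classical all_reals all_analysis.
Set Implicit Arguments. Unset Strict Implicit. Unset Printing Implicit Defensive.
Import Order.TTheory GRing.Theory Num.Theory.
Import numFieldNormedType.Exports.
Local Open Scope classical_set_scope.
Local Open Scope ring_scope.

Section Defs.
Variables (R : realType) (d : nat).
Implicit Types (x y : 'rV[R]_d).

Definition dotp x y : R := \sum_(j < d) x ord0 j * y ord0 j.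
Definition sqnorm x : R := dotp x x.

Definition grad (f : 'rV[R]_d -> R) x : 'rV[R]_d :=
  \row_(j < d) ('D_(delta_mx ord0 j) f x).

Definition strongly_convex (mu : R) (g : 'rV[R]_d -> R) :=
  forall x y, g y + dotp (grad g y) (x - y) + mu / 2 * sqnorm (x - y) <= g x.

(* proximal operator: an argmin of phi(x) + 1/(2 gamma) ||x - y||^2
   (chosen via xget; it is unique whenever it exists, e.g. for strongly convex phi) *)
Definition prox (gamma : R) (phi : 'rV[R]_d -> R) y : 'rV[R]_d :=
  xget 0 [set x | forall z, phi x + (2 * gamma)^-1 * sqnorm (x - y)
                              <= phi z + (2 * gamma)^-1 * sqnorm (z - y)].

Definition sppm_ns (n : nat) (f : 'I_n -> 'rV[R]_d -> R) (p : 'I_n -> R)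
  (gamma : R) (x0 : 'rV[R]_d) (s : seq 'I_n) : 'rV[R]_d :=
  foldl (fun x i => prox (gamma / (n%:R * p i)) (f i) x) x0 s.

(* E ||x_k - xs||^2 where i_0,...,i_{k-1} are i.i.d. with law p *)
Definition sppm_ns_expected_sqdist (n : nat) (f : 'I_n -> 'rV[R]_d -> R)
  (p : 'I_n -> R) (gamma : R) (x0 xs : 'rV[R]_d) (k : nat) : R :=
  \sum_(s : k.-tuple 'I_n)
     (\prod_(i <- s) p i) * sqnorm (sppm_ns f p gamma x0 s - xs).

Definition mu_NS (n : nat) (mu p : 'I_n -> R) : R :=
  inf [set mu i / (n%:R * p i) | i in [set: 'I_n]].

Definition sigma2_NS (n : nat) (f : 'I_n -> 'rV[R]_d -> R) (p : 'I_n -> R)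
  (xs : 'rV[R]_d) : R :=
  n%:R^-1 * \sum_(i < n) (n%:R * p i)^-1 * sqnorm (grad (f i) xs).

End Defs.

From HB Require Import structures.
From mathcomp Require Import all_boot all_order all_algebra.
From mathcomp Require Import all_classical all_reals all_analysis.
From mathcomp Require Import ring lra.
Import Order.TTheory GRing.Theory Num.Theory.
Import numFieldNormedType.Exports.
Local Open Scope classical_set_scope.
Local Open Scope ring_scope.

(* For c = gamma / (n p_i), the first-order optimality condition of the
   proximal step gives y = prox y + c grad f_i (prox y); combined with the
   strong monotonicity of grad f_i this yields the contraction
   (1 + c mu_i)^2 |prox y - xs|^2 <= |y - xs - c grad f_i (xs)|^2.
   Taking expectation over i and using c mu_i >= gamma mu_NS and
   sum_i grad f_i (xs) = 0, one step satisfies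
   E |x_{k+1} - xs|^2 <= q^2 (E |x_k - xs|^2 + gamma^2 sigma^2) with
   q = 1 / (1 + gamma mu_NS); unrolling this affine recursion around its fixed
   point gamma sigma^2 / (gamma mu_NS^2 + 2 mu_NS) gives the bound. *)

Section Euclidean.
Context {R : realType} {d : nat}.
Implicit Types (x y z v w : 'rV[R]_d).

Lemma dotpC x y : dotp x y = dotp y x.
Proof. by apply: eq_bigr => j _; rewrite mulrC. Qed.

Lemma dotpDl x y z : dotp (x + y) z = dotp x z + dotp y z.
Proof. by rewrite /dotp -big_split; apply: eq_bigr => j _; rewrite mxE mulrDl. Qed.

Lemma dotpZl (a : R) x y : dotp (a *: x) y = a * dotp x y.
Proof. by rewrite /dotp mulr_sumr; apply: eq_bigr => j _; rewrite mxE mulrA. Qed.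

Lemma dotp0l x : dotp 0 x = 0.
Proof. by rewrite -(scale0r 0) dotpZl mul0r. Qed.

Lemma dotpNl x y : dotp (- x) y = - dotp x y.
Proof. by rewrite -scaleN1r dotpZl mulN1r. Qed.

Lemma dotpBl x y z : dotp (x - y) z = dotp x z - dotp y z.
Proof. by rewrite dotpDl dotpNl. Qed.

Lemma dotp_suml (I : Type) (r : seq I) (P : pred I) (F : I -> 'rV[R]_d) y :
  dotp (\sum_(i <- r | P i) F i) y = \sum_(i <- r | P i) dotp (F i) y.
Proof. by elim/big_rec2: _ => [|i a b _ <-]; rewrite ?dotp0l ?dotpDl. Qed.

Lemma dotpZr (a : R) x y : dotp x (a *: y) = a * dotp x y.
Proof. by rewrite dotpC dotpZl dotpC. Qed.

Lemma dotpNr x y : dotp x (- y) = - dotp x y.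
Proof. by rewrite dotpC dotpNl dotpC. Qed.

Lemma sqnorm_ge0 x : 0 <= sqnorm x.
Proof. by apply: sumr_ge0 => j _; rewrite -expr2 sqr_ge0. Qed.

Lemma sqnormD x y : sqnorm (x + y) = sqnorm x + 2 * dotp x y + sqnorm y.
Proof. by rewrite /sqnorm !dotpDl !(dotpC _ (x + y)) !dotpDl (dotpC y x); ring. Qed.

Lemma sqnormZ (a : R) x : sqnorm (a *: x) = a ^+ 2 * sqnorm x.
Proof. by rewrite /sqnorm dotpZl dotpZr mulrA -expr2. Qed.

Lemma sqnormN x : sqnorm (- x) = sqnorm x.
Proof. by rewrite /sqnorm dotpNl dotpNr opprK. Qed.

Lemma sqnorm0 : sqnorm (0 : 'rV[R]_d) = 0.
Proof. by rewrite -(scale0r 0) sqnormZ expr0n mul0r. Qed.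

Lemma sqr_coord_le_sqnorm x j : x ord0 j ^+ 2 <= sqnorm x.
Proof.
rewrite /sqnorm /dotp (bigD1 j) //= expr2 lerDl.
by apply: sumr_ge0 => i _; rewrite -expr2 sqr_ge0.
Qed.

Lemma dotp_delta_mx x j : dotp x (delta_mx ord0 j) = x ord0 j.
Proof.
rewrite /dotp (bigD1 j) //= mxE !eqxx mulr1 big1 ?addr0 // => i ij.
by rewrite mxE (negbTE ij) andbF mulr0.
Qed.

Lemma dotp_le_eq x y : (forall v, dotp x v <= dotp y v) -> x = y.
Proof.
move=> le_xy; apply/rowP => j; rewrite -!dotp_delta_mx; apply/eqP.
by rewrite eq_le le_xy -lerN2 -!dotpNr le_xy.
Qed.

Lemma continuous_sqnorm_sub y : continuous (fun z : 'rV[R]_d => sqnorm (z - y)).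
Proof.
rewrite /sqnorm /dotp.
apply: (@continuous_big _ _ +%R 0 predT add_continuous) => j _ z.
have coord_sub : (fun u : 'rV[R]_d => (u - y) ord0 j) = (fun u => u ord0 j - y ord0 j).
  by apply: funext => u; rewrite !mxE.
have cj : {for z, continuous (fun u : 'rV[R]_d => (u - y) ord0 j)}.
  rewrite coord_sub; apply: continuousB; first exact: coord_continuous.
  exact: cst_continuous.
exact: continuousM.
Qed.

End Euclidean.

Section Gradient.
Context {R : realType} {d : nat}.
Implicit Types (g : 'rV[R]_d -> R) (x y v w : 'rV[R]_d).

Lemma dotp_grad g y w : differentiable g y -> dotp (grad g y) w = 'D_w g y.
Proof.
move=> dg; rewrite deriveE // {2}(row_sum_delta w) linear_sum /dotp.
by apply: eq_bigr => j _; rewrite mxE deriveE // linearZ /= mulrC.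
Qed.

Lemma derive_lb g x v (A B : R) : differentiable g x ->
  (forall h : R, 0 < h -> A - h * B <= h^-1 * (g (x + h *: v) - g x)) ->
  A <= 'D_v g x.
Proof.
move=> dg quot_ge.
have dv : derivable g x v := diff_derivable dg.
rewrite /derive.
set q := (fun h : R => h^-1 *: ((g \o shift x) (h *: v) - g x)).
have q_right : q @ 0^'+ --> lim (q @ 0^').
  move=> S /dv /nbhs_ballP [e e0 eS].
  by exists e => //= h he /gt_eqF/negbT/eS; exact.
have qB_right : (fun h => q h + h * B) @ 0^'+ --> lim (q @ 0^') + 0 * B.
  apply: cvgD => //; apply: cvgMl.
  exact: (cvg_at_right_filter cvg_id).
rewrite mul0r addr0 in qB_right.
rewrite -(cvg_lim _ qB_right) //; apply: limr_ge.
  by apply/cvg_ex; eexists; exact: qB_right.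
near=> h.
have h0 : 0 < h by near: h; exact: nbhs_right_gt.
rewrite /q /= addrC -lerBlDr (addrC (h *: v)); move: (quot_ge h h0).
change (h^-1 *: ?a) with (h^-1 * a); lra.
Unshelve. all: by end_near.
Qed.

Lemma derive_ge0_at_min g x w : differentiable g x -> (forall y, g x <= g y) ->
  0 <= 'D_w g x.
Proof.
move=> dg gx_min; apply: (derive_lb g x w 0 0 dg) => h h0.
by rewrite mulr0 subr0 mulr_ge0 ?invr_ge0 ?(ltW h0) ?subr_ge0.
Qed.

Lemma strongly_convex_grad_monotone (mu : R) g x y : strongly_convex mu g ->
  mu * sqnorm (x - y) <= dotp (grad g x - grad g y) (x - y).
Proof.
move=> sc; have := sc x y; have := sc y x.
rewrite -opprB sqnormN dotpNr dotpBl; lra.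
Qed.

End Gradient.

Section Prox.
Context {R : realType} {d : nat}.
Implicit Types (phi : 'rV[R]_d -> R) (x y z v : 'rV[R]_d).

(* [prox c phi y] is [xget] of the set of minimizers of this function. *)
Definition prox_objective (c : R) phi y z : R := phi z + (2 * c)^-1 * sqnorm (z - y).

Lemma continuous_prox_objective (c : R) phi y :
  (forall x, differentiable phi x) -> continuous (prox_objective c phi y).
Proof.
move=> dphi z.
have -> : prox_objective c phi y = phi + cst (2 * c)^-1 \* (fun z => sqnorm (z - y)) by [].
apply: continuousD; first exact: differentiable_continuous.
apply: continuousM; first exact: cst_continuous.
exact: continuous_sqnorm_sub.
Qed.

Lemma grad_at_prox_objective_min (c : R) phi y x :
  (forall x, differentiable phi x) -> 0 < c ->
  (forall z, prox_objective c phi y x <= prox_objective c phi y z) ->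
  grad phi x = c^-1 *: (y - x).
Proof.
move=> dphi c0 x_min; apply/esym/dotp_le_eq => v.
rewrite dotp_grad //; apply: (derive_lb phi x v _ ((2 * c)^-1 * sqnorm v) (dphi x)) => h h0.
rewrite dotpZl -[y - x]opprB dotpNl.
have := x_min (x + h *: v); rewrite /prox_objective addrAC.
rewrite [sqnorm (x - y + _)]sqnormD sqnormZ dotpZr.
set a := (2 * c)^-1; set t := dotp (x - y) v; set s := sqnorm v.
have -> : c^-1 = 2 * a by rewrite /a invfM mulrA divff ?mul1r ?pnatr_eq0.
have h_inv : h^-1 * (h * (2 * a * - t - h * (a * s))) = 2 * a * - t - h * (a * s).
  by rewrite mulKf ?gt_eqF.
rewrite -h_inv ler_pM2l ?invr_gt0 //.
have -> : h * (2 * a * - t - h * (a * s)) = - (a * (2 * (h * t) + h ^+ 2 * s)).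
  by rewrite expr2; ring.
lra.
Qed.

Section ProxStrongConvex.
Context {mu c : R} {phi : 'rV[R]_d -> R}.
Hypotheses (dphi : forall x, differentiable phi x) (mu0 : 0 <= mu)
  (sc : strongly_convex mu phi) (c0 : 0 < c).

Lemma prox_objective_lt y z :
  sqnorm (grad phi y) < (2 * c)^-1 ^+ 2 * sqnorm (z - y) ->
  prox_objective c phi y y < prox_objective c phi y z.
Proof.
move=> far; rewrite /prox_objective subrr sqnorm0 mulr0 addr0.
set a := (2 * c)^-1 in far *; have a0 : 0 < a by rewrite invr_gt0 mulr_gt0.
set s := sqnorm (z - y) in far *; set t := dotp (grad phi y) (z - y).
have s0 : 0 <= mu / 2 * s by rewrite mulr_ge0 ?divr_ge0 ?sqnorm_ge0.
have := sc z y; rewrite -/s -/t => sc_zy.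
have := sqnorm_ge0 (grad phi y + a *: (z - y)).
rewrite sqnormD sqnormZ dotpZr -/s -/t => sq_ge0.
have : 0 < a * (t + a * s) by rewrite mulrDr mulrA -expr2; lra.
rewrite pmulr_rgt0 //; lra.
Qed.

Lemma prox_objective_min_exists y :
  exists x, forall z, prox_objective c phi y x <= prox_objective c phi y z.
Proof.
(* Coercivity: outside a box around y the objective exceeds its value at y,
   so a minimizer over that compact box is a global one. *)
set r := sqnorm (grad phi y) / (2 * c)^-1 ^+ 2.
have r0 : 0 <= r by rewrite divr_ge0 ?sqnorm_ge0 ?exprn_ge0 // invr_ge0 mulr_ge0 // ltW.
set rho := r + 1.
set K := [set v : 'rV[R]_d | forall j, `[y ord0 j - rho, y ord0 j + rho]%classic (v ord0 j)].
have cK : compact K.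
  apply: (@rV_compact _ _ (fun j => `[y ord0 j - rho, y ord0 j + rho]%classic)) => j.
  exact: segment_compact.
have yK : K y by move=> j /=; rewrite in_itv /= lerBlDr lerDl ler_wpDl //; lra.
have outside_far z : ~ K z -> r < sqnorm (z - y).
  move=> zK; have [j /= /negP] : exists j, ~ `[y ord0 j - rho, y ord0 j + rho]%classic (z ord0 j).
    by apply/existsNP => inK; apply: zK => j; apply: inK.
  rewrite in_itv /= negb_and -!ltNge => out_j.
  apply: lt_le_trans (sqr_coord_le_sqnorm (z - y) j); rewrite !mxE.
  have : rho < `|z ord0 j - y ord0 j| by case/orP: out_j => ?; rewrite ltr_normr; lra.
  rewrite -real_normK ?num_real // expr2 /rho; set u := `|_|; nra.
have [x _ x_min] := EVT_min_rV (ex_intro _ y yK) cK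
  (continuous_subspaceT (continuous_prox_objective c phi y dphi)).
exists x => z; have [Kz|Kz] := pselect (K z); first by apply: x_min; rewrite inE.
apply/ltW/(le_lt_trans (x_min y _)); first by rewrite inE.
apply: prox_objective_lt.
have := outside_far z Kz; rewrite ltr_pdivrMr ?[_ * sqnorm _]mulrC //.
by rewrite exprn_gt0 // invr_gt0 mulr_gt0.
Qed.

Lemma prox_objective_min y z :
  prox_objective c phi y (prox c phi y) <= prox_objective c phi y z.
Proof. exact: (xgetPex 0 (prox_objective_min_exists y)). Qed.

Lemma grad_prox y : grad phi (prox c phi y) = c^-1 *: (y - prox c phi y).
Proof. exact: grad_at_prox_objective_min dphi c0 (prox_objective_min y). Qed.

Lemma prox_contraction y xs :
  (1 + c * mu) ^+ 2 * sqnorm (prox c phi y - xs)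
    <= sqnorm (y - xs - c *: grad phi xs).
Proof.
set u := prox c phi y; set D := u - xs.
set H := grad phi u - grad phi xs - mu *: D.
have -> : y - xs - c *: grad phi xs = (1 + c * mu) *: D + c *: H.
  have -> : y = u + c *: grad phi u.
    by rewrite grad_prox scalerA mulfV ?gt_eqF // scale1r addrC subrK.
  by apply/rowP => j; rewrite !mxE; ring.
have DH_ge0 : 0 <= dotp D H.
  rewrite /H dotpC dotpBl dotpZl subr_ge0.
  exact: strongly_convex_grad_monotone.
rewrite [sqnorm (_ *: D + _)]sqnormD !sqnormZ dotpZl dotpZr.
have := sqnorm_ge0 H.
have : 0 <= (1 + c * mu) * (c * dotp D H).
  by rewrite !mulr_ge0 // ?addr_ge0 // ?mulr_ge0 // ltW.
have : 0 <= c ^+ 2 by rewrite exprn_ge0 // ltW.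
nra.
Qed.

End ProxStrongConvex.

End Prox.

Section AveragedIteration.
Context {R : realDomainType} {I : finType} {X : Type}.
Context {w : I -> R} {T : I -> X -> X} {A : X -> R} {E : nat -> X -> R} {rho K : R}.
Hypotheses (w_ge0 : forall i, 0 <= w i) (sum_w : \sum_i w i = 1) (rho_ge0 : 0 <= rho).
Hypotheses (E0 : forall x, E 0 x = A x)
  (ES : forall k x, E k.+1 x = \sum_i w i * E k (T i x)).
Hypothesis step : forall x, \sum_i w i * A (T i x) <= rho * A x + (1 - rho) * K.

Lemma averaged_iteration_bound k x : E k x <= rho ^+ k * A x + (1 - rho ^+ k) * K.
Proof.
elim: k x => [|k IH] x; first by rewrite E0 expr0 mul1r subrr mul0r addr0.
have rhok_ge0 : 0 <= rho ^+ k by rewrite exprn_ge0.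
rewrite ES; apply: (le_trans (ler_sum _ (fun i _ => ler_wpM2l (w_ge0 i) (IH (T i x))))).
under eq_bigr do rewrite mulrDr mulrCA.
rewrite big_split /= -mulr_sumr -mulr_suml sum_w mul1r exprS.
have := ler_wpM2l rhok_ge0 (step x).
have -> : rho ^+ k * (rho * A x + (1 - rho) * K)
  = rho * rho ^+ k * A x + (rho ^+ k - rho * rho ^+ k) * K by ring.
lra.
Qed.

End AveragedIteration.

Lemma sum_ord_eq1_gt0 {R : nzRingType} {n} {p : 'I_n -> R} :
  \sum_(i < n) p i = 1 -> (0 < n)%N.
Proof. by case: n p => // p; rewrite big_ord0 => /eqP; rewrite eq_sym oner_eq0. Qed.

Section SPPM_NS.
Context {R : realType} {d n : nat} {f : 'I_n -> 'rV[R]_d -> R} {p : 'I_n -> R} {gamma : R}.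

Lemma sppm_ns_expected_sqdist0 x0 xs :
  sppm_ns_expected_sqdist f p gamma x0 xs 0 = sqnorm (x0 - xs).
Proof.
rewrite /sppm_ns_expected_sqdist (big_pred1 [tuple]) => [|t]; last first.
  by apply/esym/eqP; exact: tuple0.
by rewrite big_nil mul1r.
Qed.

Lemma sppm_ns_expected_sqdistS x0 xs k :
  sppm_ns_expected_sqdist f p gamma x0 xs k.+1 =
  \sum_(i < n) p i * sppm_ns_expected_sqdist f p gamma
      (prox (gamma / (n%:R * p i)) (f i) x0) xs k.
Proof.
rewrite /sppm_ns_expected_sqdist.
rewrite (reindex (fun it : 'I_n * k.-tuple 'I_n => [tuple of it.1 :: it.2])) /=; last first.
  exists (fun s => (thead s, [tuple of behead s])).
    by move=> [i t] _ /=; congr (_, _); apply: val_inj.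
  by move=> s _; rewrite [RHS](tuple_eta s).
rewrite -(pair_big xpredT xpredT (fun i (t : k.-tuple 'I_n) =>
  (\prod_(j <- [tuple of i :: t]) p j) *
   sqnorm (sppm_ns f p gamma x0 [tuple of i :: t] - xs))) /=.
apply: eq_bigr => i _; rewrite mulr_sumr; apply: eq_bigr => t _.
by rewrite big_cons mulrA.
Qed.

End SPPM_NS.

Section SPPM_NS_convergence.
Context {R : realType} {d n : nat} {f : 'I_n -> 'rV[R]_d -> R} {mu p : 'I_n -> R}.
Context {gamma : R} {xs : 'rV[R]_d}.
Hypotheses (df : forall i x, differentiable (f i) x) (mu_gt0 : forall i, 0 < mu i)
  (sc : forall i, strongly_convex (mu i) (f i)) (p_gt0 : forall i, 0 < p i)
  (sum_p : \sum_(i < n) p i = 1) (gamma_gt0 : 0 < gamma).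

Let n_gt0 : 0 < n%:R :> R.
Proof. by rewrite ltr0n (sum_ord_eq1_gt0 sum_p). Qed.

Let ratio_gt0 i : 0 < mu i / (n%:R * p i).
Proof. by rewrite divr_gt0 // mulr_gt0. Qed.

Lemma mu_NS_le i : mu_NS mu p <= mu i / (n%:R * p i).
Proof.
apply: ge_inf; last by exists i.
by exists 0 => _ [j _ <-]; exact/ltW/ratio_gt0.
Qed.

Lemma mu_NS_gt0 : 0 < mu_NS mu p.
Proof.
pose i0 := Ordinal (sum_ord_eq1_gt0 sum_p).
have [i _ i_min] := @arg_minP _ R _ i0 xpredT (fun i => mu i / (n%:R * p i)) isT.
apply: (lt_le_trans (ratio_gt0 i)); apply: lb_le_inf; first by exists (mu i0 / (n%:R * p i0)), i0.
by move=> _ [j _ <-]; exact: i_min.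
Qed.

Lemma sigma2_NS_ge0 : 0 <= sigma2_NS f p xs.
Proof.
apply: mulr_ge0; first by rewrite invr_ge0 ltW.
apply: sumr_ge0 => i _; by rewrite mulr_ge0 ?sqnorm_ge0 // invr_ge0 ltW // mulr_gt0.
Qed.

Lemma sum_grad_eq0_at_min :
  (forall y, n%:R^-1 * \sum_(i < n) f i xs <= n%:R^-1 * \sum_(i < n) f i y) ->
  \sum_(i < n) grad (f i) xs = 0.
Proof.
move=> xs_min; apply/esym/dotp_le_eq => w.
rewrite dotp0l dotp_suml.
rewrite (eq_bigr (fun i => 'D_w (f i) xs)); last by move=> i _; rewrite dotp_grad.
rewrite -derive_sum; last by move=> i; exact: diff_derivable.
apply: derive_ge0_at_min; first exact: differentiable_sum.
by move=> y; rewrite !fct_sumE -(ler_pM2l (_ : 0 < n%:R^-1)) ?invr_gt0.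
Qed.

Lemma prox_step_sqdist_le i y :
  p i * sqnorm (prox (gamma / (n%:R * p i)) (f i) y - xs) <=
  (1 + gamma * mu_NS mu p)^-1 ^+ 2 *
    (p i * sqnorm (y - xs) - 2 * (gamma / n%:R) * dotp (grad (f i) xs) (y - xs)
     + gamma ^+ 2 * (n%:R^-1 * ((n%:R * p i)^-1 * sqnorm (grad (f i) xs)))).
Proof.
set m := mu_NS mu p; set c := gamma / (n%:R * p i).
have npi_gt0 : 0 < n%:R * p i by rewrite mulr_gt0.
have c_gt0 : 0 < c by rewrite divr_gt0.
have gm_gt0 : 0 < gamma * m by rewrite mulr_gt0 ?mu_NS_gt0.
have gm_le : gamma * m <= c * mu i.
  by rewrite /c mulrAC -mulrA ler_pM2l ?mu_NS_le.
have := prox_contraction (df i) (ltW (mu_gt0 i)) (sc i) c_gt0 y xs.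
rewrite [sqnorm (y - xs - _)]sqnormD sqnormN sqnormZ dotpNr dotpZr dotpC.
set S := sqnorm (prox c (f i) y - xs); set A := sqnorm (y - xs).
set t := dotp (grad (f i) xs) (y - xs); set s := sqnorm (grad (f i) xs).
move=> contraction.
have contraction_m : (1 + gamma * m) ^+ 2 * S <= A + 2 * - (c * t) + c ^+ 2 * s.
  apply: le_trans contraction; apply: ler_wpM2r; first exact: sqnorm_ge0.
  by rewrite !expr2; nra.
have -> : p i * S = (1 + gamma * m)^-1 ^+ 2 * (p i * ((1 + gamma * m) ^+ 2 * S)).
  by rewrite mulrCA exprVn mulKf // expf_neq0 // gt_eqF // addr_gt0.
apply: ler_wpM2l; first by rewrite exprn_ge0 // invr_ge0 ltW // addr_gt0.
have -> : p i * A - 2 * (gamma / n%:R) * t + gamma ^+ 2 * (n%:R^-1 * ((n%:R * p i)^-1 * s))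
  = p i * (A + 2 * - (c * t) + c ^+ 2 * s).
  by rewrite /c; field; rewrite !gt_eqF.
by apply: ler_wpM2l; [exact: ltW | exact: contraction_m].
Qed.

Hypothesis xs_min :
  forall y, n%:R^-1 * \sum_(i < n) f i xs <= n%:R^-1 * \sum_(i < n) f i y.

Lemma sppm_ns_step y :
  \sum_(i < n) p i * sqnorm (prox (gamma / (n%:R * p i)) (f i) y - xs)
    <= (1 + gamma * mu_NS mu p)^-1 ^+ 2 * (sqnorm (y - xs) + gamma ^+ 2 * sigma2_NS f p xs).
Proof.
apply: le_trans (ler_sum _ (fun i _ => prox_step_sqdist_le i y)) _.
rewrite -mulr_sumr big_split /= sumrB -mulr_suml sum_p mul1r -mulr_sumr.
rewrite -mulr_sumr -dotp_suml sum_grad_eq0_at_min // dotp0l mulr0 subr0.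
by rewrite /sigma2_NS -mulr_sumr.
Qed.

End SPPM_NS_convergence.

Theorem mainTheorem4 (R : realType) (d n : nat)
  (f : 'I_n -> 'rV[R]_d -> R) (mu p : 'I_n -> R) (xs x0 : 'rV[R]_d)
  (gamma : R) (k : nat) :
  (forall i x, differentiable (f i) x) ->
  (forall i, 0 < mu i) ->
  (forall i, strongly_convex (mu i) (f i)) ->
  (forall y, n%:R^-1 * \sum_(i < n) f i xs <= n%:R^-1 * \sum_(i < n) f i y) ->
  (forall i, 0 < p i) ->
  \sum_(i < n) p i = 1 ->
  0 < gamma ->
  sppm_ns_expected_sqdist f p gamma x0 xs k
    <= (1 + gamma * mu_NS mu p)^-1 ^+ (2 * k) * sqnorm (x0 - xs)
       + gamma * sigma2_NS f p xs
         / (gamma * mu_NS mu p ^+ 2 + 2 * mu_NS mu p).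
Proof.
move=> df mu_gt0 sc xs_min p_gt0 sum_p gamma_gt0.
set m := mu_NS mu p; set q := (1 + gamma * m)^-1.
set K := gamma * sigma2_NS f p xs / (gamma * m ^+ 2 + 2 * m).
have m_gt0 : 0 < m := mu_NS_gt0 mu_gt0 p_gt0 sum_p.
have q_sq_ge0 : 0 <= q ^+ 2 by rewrite exprn_ge0 // invr_ge0 ltW // addr_gt0 // mulr_gt0.
have K_ge0 : 0 <= K.
  apply: divr_ge0; first by rewrite mulr_ge0 ?(sigma2_NS_ge0 p_gt0 sum_p) // ltW.
  by rewrite ltW // addr_gt0 // mulr_gt0 // exprn_gt0.
have fixed_point : q ^+ 2 * (gamma ^+ 2 * sigma2_NS f p xs) = (1 - q ^+ 2) * K.
  by rewrite /q /K; field; rewrite !gt_eqF ?addr_gt0 ?mulr_gt0 ?exprn_gt0.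
have step y : \sum_(i < n) p i * sqnorm (prox (gamma / (n%:R * p i)) (f i) y - xs)
    <= q ^+ 2 * sqnorm (y - xs) + (1 - q ^+ 2) * K.
  by rewrite -fixed_point -mulrDr (sppm_ns_step df mu_gt0 sc p_gt0 sum_p gamma_gt0 xs_min).
have := averaged_iteration_bound (E := fun k x => sppm_ns_expected_sqdist f p gamma x xs k)
  (fun i => ltW (p_gt0 i)) sum_p q_sq_ge0 (sppm_ns_expected_sqdist0 ^~ xs)
  (fun k x => sppm_ns_expected_sqdistS x xs k) step k x0.
rewrite -exprM => /le_trans; apply; rewrite lerD2l.
by apply: ler_piMl => //; rewrite gerBl exprn_ge0 // invr_ge0 ltW // addr_gt0 // mulr_gt0.
Qed.
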